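(* Let $n\geq 5$ and let $f$ be a permutation of $V(\overline{C_n})$ that is not an automorphism of $\overline{C_n}$. Then $\delta_f(\overline{C_n})\geq 4$.
   Context: $C_n$ is the cycle on vertices $v_1,\dots,v_n$ (with $v_i$ adjacent to $v_{i+1}$, indices mod $n$), and $\overline{C_n}$ is its complement: two distinct vertices are adjacent in $\overline{C_n}$ iff they are not adjacent in $C_n$. $d(x,y)$ denotes the distance in $\overline{C_n}$. For a permutation $f$ of the vertex set and distinct vertices $x,y$, $\delta_f(x,y)=|d(x,y)-d(f(x),f(y))|$, and $\delta_f(\overline{C_n})=\sum\delta_f(x,y)$ over all unordered pairs $\{x,y\}$ of distinct vertices. *)

From mathcomp Require Import all_boot all_fingroup.
Set Implicit Arguments. Unset Strict Implicit. Unset Printing Implicit Defensive.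

(* Vertices v_1..v_n are represented by 'I_n (v_{i+1} ~ i). *)

Definition cycle_adj (n : nat) (x y : 'I_n) : bool :=
  ((x.+1 %% n)%N == y) || ((y.+1 %% n)%N == x).

Definition ccycle_adj (n : nat) (x y : 'I_n) : bool :=
  (x != y) && ~~ cycle_adj x y.

Fixpoint cwalk (n : nat) (k : nat) (x y : 'I_n) : bool :=
  match k with
  | 0 => x == y
  | k'.+1 => [exists z, ccycle_adj x z && cwalk k' z y]
  end.

(* Graph distance in the complement of C_n: the least k < n such that a walk
   of length k joins x and y (a shortest walk is a path, so has length <= n-1).
   If no such k exists (disconnected case) the value is n; this never happens
   for n >= 5 since the complement of C_n is connected. *)
Definition cdist (n : nat) (x y : 'I_n) : nat :=
  find (fun k => cwalk k x y) (iota 0 n).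

Definition absdiff (a b : nat) : nat := (a - b) + (b - a).

Definition delta_pair (n : nat) (f : {perm 'I_n}) (x y : 'I_n) : nat :=
  absdiff (cdist x y) (cdist (f x) (f y)).

Definition delta (n : nat) (f : {perm 'I_n}) : nat :=
  \sum_(x : 'I_n) \sum_(y : 'I_n | (x < y)%N) delta_pair f x y.

Definition is_caut (n : nat) (f : {perm 'I_n}) : Prop :=
  forall x y : 'I_n, ccycle_adj (f x) (f y) = ccycle_adj x y.

From mathcomp Require Import all_boot all_fingroup.

Set Implicit Arguments.
Unset Strict Implicit.
Unset Printing Implicit Defensive.

(* For n >= 5 the complement of C_n has diameter 2: cycle-adjacent vertices
   are at distance 2 and the other pairs of distinct vertices at distance 1.
   So delta_f counts the pairs whose C_n-adjacency changes under f, i.e. the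
   symmetric difference of the 2-regular graphs C_n and f^-1(C_n).  Equal
   degrees force every vertex to lose as many edges as it gains, so as f is
   not an automorphism some edge ab is lost.  Then a gains some ac with c
   outside {a, b}, and c in turn loses some cd: two distinct lost edges ab
   and cd.  Symmetrically two edges are gained. *)

Section RelDiff.

Variable T : finType.

Definition rel_diff (E F : rel T) : rel T := fun x y => E x y && ~~ F x y.

Variables E F : rel T.
Hypotheses (symE : symmetric E) (symF : symmetric F).
Hypotheses (irrE : irreflexive E) (irrF : irreflexive F).
Hypothesis degEF : forall x, #|[set y | E x y]| = #|[set y | F x y]|.

Lemma card_rel_diff x :
  #|[set y | rel_diff E F x y]| = #|[set y | rel_diff F E x y]|.
Proof.
have splitE := cardsID [set y | F x y] [set y | E x y].
have splitF := cardsID [set y | E x y] [set y | F x y].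
rewrite setIC degEF -splitF in splitE.
have -> : [set y | rel_diff E F x y] = [set y | E x y] :\: [set y | F x y].
  by apply/setP => y; rewrite !inE andbC.
have -> : [set y | rel_diff F E x y] = [set y | F x y] :\: [set y | E x y].
  by apply/setP => y; rewrite !inE andbC.
by apply/eqP; rewrite -(eqn_add2l #|[set y | F x y] :&: [set y | E x y]|) splitE.
Qed.

Lemma exists_rel_diff x :
  [exists y, rel_diff E F x y] = [exists y, rel_diff F E x y].
Proof.
have card_gt0_exists (D : rel T) : [exists y, D x y] = (0 < #|[set y | D x y]|).
  by apply/existsP/card_gt0P => -[y Dy]; exists y; move: Dy; rewrite !inE.
by rewrite !card_gt0_exists card_rel_diff.
Qed.

Lemma four_le_card_rel_diff a b : rel_diff E F a b ->
  4 <= #|[set p : T * T | rel_diff E F p.1 p.2]|.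
Proof.
move=> Dab; have /andP[Eab nFab] := Dab.
have /existsP[c /andP[Fac nEac]] : [exists c, rel_diff F E a c].
  by rewrite -exists_rel_diff; apply/existsP; exists b.
have /existsP[d Dcd] : [exists d, rel_diff E F c d].
  by rewrite exists_rel_diff; apply/existsP; exists a; rewrite /rel_diff symF Fac symE.
have /andP[Ecd _] := Dcd.
have ab : a != b by apply: contraTneq Eab => ->; rewrite irrE.
have ca : c != a by apply: contraTneq Fac => ->; rewrite irrF.
have cb : c != b by apply: contraNneq nFab => <-.
have cd : c != d by apply: contraTneq Ecd => <-; rewrite irrE.
have pairs_uniq : uniq [:: (a, b); (b, a); (c, d); (d, c)].
  rewrite /= !inE !xpair_eqE (eq_sym b a) (eq_sym a c) (eq_sym b c) (eq_sym d c).
  by rewrite (negbTE ab) (negbTE ca) (negbTE cb) (negbTE cd) !andbF.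
apply: (@leq_trans #|[:: (a, b); (b, a); (c, d); (d, c)]|).
  by rewrite (card_uniqP pairs_uniq).
apply/subset_leq_card/subsetP => p.
by rewrite !inE => /or4P[] /eqP -> //=; rewrite /rel_diff symE symF.
Qed.

End RelDiff.

Lemma sum_neq_rel_card (T : finType) (E F : rel T) :
  \sum_(x : T) \sum_(y : T) (E x y != F x y : nat) =
  #|[set p : T * T | rel_diff E F p.1 p.2]| + #|[set p : T * T | rel_diff F E p.1 p.2]|.
Proof.
rewrite pair_bigA -!sum1dep_card [in RHS]big_mkcond [X in _ + X]big_mkcond -big_split /=.
by apply: eq_bigr => p _; rewrite /rel_diff; case: (E _ _); case: (F _ _).
Qed.

Lemma eight_le_sum_neq_rel (T : finType) (E F : rel T) x y :
  symmetric E -> symmetric F -> irreflexive E -> irreflexive F ->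
  (forall x, #|[set y | E x y]| = #|[set y | F x y]|) ->
  E x y != F x y -> 8 <= \sum_(x : T) \sum_(y : T) (E x y != F x y : nat).
Proof.
move=> symE symF irrE irrF degEF neq_xy.
have degFE z : #|[set y | F z y]| = #|[set y | E z y]| by rewrite degEF.
have [a [b DEFab]] : exists a b, rel_diff E F a b.
  have /orP[DEFxy | DFExy] : rel_diff E F x y || rel_diff F E x y.
    by move: neq_xy; rewrite /rel_diff; case: (E x y); case: (F x y).
  - by exists x, y.
  have /existsP[z DEFxz] : [exists z, rel_diff E F x z].
    by rewrite exists_rel_diff //; apply/existsP; exists y.
  by exists x, z.
have /existsP[c DFEac] : [exists c, rel_diff F E a c].
  by rewrite -exists_rel_diff //; apply/existsP; exists b.
rewrite sum_neq_rel_card -[8]/(4 + 4) leq_add //.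
- exact: (four_le_card_rel_diff symE symF irrE irrF degEF DEFab).
- exact: (four_le_card_rel_diff symF symE irrF irrE degFE DFEac).
Qed.

Lemma sum_ltn_double m (g : 'I_m -> 'I_m -> nat) :
  (forall x y, g x y = g y x) -> (forall x, g x x = 0) ->
  \sum_(x : 'I_m) \sum_(y : 'I_m) g x y =
  2 * \sum_(x : 'I_m) \sum_(y : 'I_m | x < y) g x y.
Proof.
move=> gC g0; have split_row (x : 'I_m) :
    \sum_(y : 'I_m) g x y = \sum_(y : 'I_m | x < y) g x y + \sum_(y : 'I_m | y < x) g x y.
  rewrite (bigID (fun y : 'I_m => x < y)) /=; congr (_ + _).
  rewrite big_mkcond [RHS]big_mkcond; apply: eq_bigr => y _ /=.
  by case: ltngtP => [||/val_inj ->]; rewrite ?g0.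
rewrite (eq_bigr _ (fun x _ => split_row x)) big_split /= mul2n -addnn.
congr (_ + _); rewrite (exchange_big_dep xpredT) //=.
by apply: eq_bigr => x _; apply: eq_bigr => y _; exact: gC.
Qed.

Section ComplementOfCycle.

Variable n : nat.
Implicit Types x y : 'I_n.

Lemma val_iter_ordS k x : val (iter k (@ordS n) x) = (x + k) %% n.
Proof.
elim: k => [|k IHk] /=; first by rewrite addn0 modn_small.
by rewrite IHk -addn1 modnDml -addnA addn1 addnS.
Qed.

Lemma iter_ordS_neq k x : 0 < k < n -> iter k (@ordS n) x != x.
Proof.
case/andP=> k_gt0 k_lt_n; rewrite -val_eqE /= val_iter_ordS.
rewrite -[X in _ != X](modn_small (ltn_ord x)) -[X in _ != X %% n]addn0.
by rewrite eqn_modDl mod0n modn_small // -lt0n.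
Qed.

Lemma cycle_adjE x y : cycle_adj x y = (ordS x == y) || (ordS y == x).
Proof. by rewrite -!val_eqE. Qed.

Lemma cycle_adj_sym : symmetric (@cycle_adj n).
Proof. by move=> x y; rewrite /cycle_adj orbC. Qed.

Lemma cycle_adj_irr : 1 < n -> irreflexive (@cycle_adj n).
Proof. by move=> n_gt1 x; rewrite cycle_adjE orbb; apply/negbTE/(@iter_ordS_neq 1). Qed.

Lemma card_cycle_adj x : 2 < n -> #|[set y | cycle_adj x y]| = 2.
Proof.
move=> n_gt2; have ordS_eq := can2_eq (@ordSK n) (@ord_predK n).
have -> : [set y | cycle_adj x y] = [set ordS x; ord_pred x].
  by apply/setP => y; rewrite !inE cycle_adjE orbC ordS_eq orbC eq_sym.
by rewrite cards2 -ordS_eq (@iter_ordS_neq 2).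
Qed.

Lemma ccycle_adj_sym : symmetric (@ccycle_adj n).
Proof. by move=> x y; rewrite /ccycle_adj cycle_adj_sym eq_sym. Qed.

Lemma cwalkS k x y : cwalk k.+1 x y = [exists z, ccycle_adj x z && cwalk k z y].
Proof. by []. Qed.

Lemma cwalk1 x y : cwalk 1 x y = ccycle_adj x y.
Proof.
rewrite cwalkS; apply/existsP/idP => [[z /andP[xz /eqP <-]] // | xy].
by exists y; rewrite xy /= eqxx.
Qed.

(* [z + 3] is a common neighbour of [z] and [z + 1] in the complement. *)
Lemma cwalk2_cycle_adj x y : 4 < n -> cycle_adj x y -> cwalk 2 x y.
Proof.
move=> n_gt4; suff succ_case (z : 'I_n) : cwalk 2 z (ordS z).
  rewrite cycle_adjE => /orP[] /eqP <- //.
  have := succ_case y; rewrite cwalkS => /existsP[z /andP[yz]].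
  rewrite cwalk1 => zSy; rewrite cwalkS; apply/existsP; exists z.
  by rewrite cwalk1 ccycle_adj_sym zSy ccycle_adj_sym.
have ne k : 0 < k < 5 -> (iter k (@ordS n) z == z) = false.
  move=> /andP[k_gt0 k_lt5]; apply/negbTE/iter_ordS_neq.
  by rewrite k_gt0 (leq_trans k_lt5).
rewrite cwalkS; apply/existsP; exists (iter 3 (@ordS n) z).
rewrite cwalk1 /ccycle_adj !cycle_adjE /=.
by rewrite !(inj_eq (@ordS_inj n)) ![z == _]eq_sym (ne 1) ?(ne 2) ?(ne 3) ?(ne 4).
Qed.

Lemma cdistE x y : 4 < n ->
  cdist x y = if x == y then 0 else if cycle_adj x y then 2 else 1.
Proof.
move=> n_gt4; rewrite /cdist.
have -> : iota 0 n = [:: 0, 1, 2 & iota 3 (n - 3)].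
  by rewrite -{1}(subnKC (ltnW (ltnW n_gt4))) iotaD.
rewrite /= -/(cwalk 1 x y) cwalk1 /ccycle_adj.
case: eqP => //= _; case xy: (cycle_adj x y) => //=.
by have /= -> := cwalk2_cycle_adj n_gt4 xy.
Qed.

Variable f : {perm 'I_n}.

Lemma delta_pairE x y : 4 < n ->
  delta_pair f x y = (cycle_adj x y != cycle_adj (f x) (f y)).
Proof.
move=> n_gt4; rewrite /delta_pair !cdistE // (inj_eq perm_inj).
case: eqP => [<-|_]; first by rewrite !cycle_adj_irr // (ltn_trans _ n_gt4).
by case: (cycle_adj x y); case: (cycle_adj (f x) (f y)).
Qed.

Lemma card_relpre_cycle_adj x : 2 < n -> #|[set y | relpre f (@cycle_adj n) x y]| = 2.
Proof.
move=> n_gt2.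
have -> : [set y | relpre f (@cycle_adj n) x y] = f @^-1: [set y | cycle_adj (f x) y].
  by apply/setP => y; rewrite !inE.
by rewrite card_preimset ?card_cycle_adj //; apply: perm_inj.
Qed.

Lemma not_caut_cycle_adj : ~ is_caut f ->
  exists x y, cycle_adj x y != relpre f (@cycle_adj n) x y.
Proof.
move=> not_aut; have [/existsP[x /existsP[y xy]] | none] :=
  boolP [exists x, exists y, cycle_adj x y != cycle_adj (f x) (f y)].
  by exists x, y.
case: not_aut => x y; rewrite /ccycle_adj (inj_eq perm_inj); congr (_ && ~~ _).
apply/eqP/negPn/negP => xy; case/negP: none.
by apply/existsP; exists x; apply/existsP; exists y; rewrite eq_sym.
Qed.

Lemma delta_double : 4 < n ->
  2 * delta f = \sum_x \sum_y (cycle_adj x y != relpre f (@cycle_adj n) x y : nat).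
Proof.
move=> n_gt4; rewrite /delta -sum_ltn_double.
- by apply: eq_bigr => x _; apply: eq_bigr => y _; rewrite delta_pairE.
- by move=> x y; rewrite !delta_pairE // cycle_adj_sym [cycle_adj (f x) _]cycle_adj_sym.
- by move=> x; rewrite delta_pairE // !cycle_adj_irr // (ltn_trans _ n_gt4).
Qed.

End ComplementOfCycle.

Theorem lemma2p3 (n : nat) (f : {perm 'I_n}) :
  (5 <= n)%N -> ~ is_caut f -> (4 <= delta f)%N.
Proof.
move=> n_gt4 not_aut; have n_gt2 : 2 < n by rewrite (ltn_trans _ n_gt4).
have [x [y neq_xy]] := not_caut_cycle_adj not_aut.
have deg_eq z : #|[set y | cycle_adj z y]| = #|[set y | relpre f (@cycle_adj n) z y]|.
  by rewrite card_cycle_adj ?card_relpre_cycle_adj.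
have irr := cycle_adj_irr (ltnW n_gt2).
have := eight_le_sum_neq_rel (F := relpre f (@cycle_adj n)) (@cycle_adj_sym n)
  (fun x y => cycle_adj_sym (f x) (f y)) irr (fun x => irr (f x)) deg_eq neq_xy.
by rewrite -delta_double // -[8]/(2 * 4) leq_pmul2l.
Qed.
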